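(* Every bipartite graph $H=(V,F)$ with no connected component consisting of a single edge admits a partial edge colouring with $4$ colours such that all edges of $H$ are satisfied and every vertex of $V$ is incident with a uniquely coloured edge.
   Context: For an edge $e=uv$, $E[e]$ is the set of edges incident with $u$ or $v$ and $E(e)=E[e]\setminus\{e\}$. In a partial edge colouring (not all edges need be coloured), a colour $\alpha$ is unique for $e$ if $\alpha$ appears on some edge $e'\in E(e)$ and on no other edge of $E[e]\setminus\{e'\}$; $e$ is satisfied if such a colour exists. A vertex $v$ is incident with a uniquely coloured edge if some coloured edge incident with $v$ has a colour appearing on no other edge incident with $v$. (Isolated vertices are not excluded by the hypothesis; the claim is as stated for every vertex of $V$, where vertices of degree $0$ may be assumed absent since $H$ is given via its edges—more precisely, the claim applies to every vertex of positive degree, and $V$ is assumed to have no isolated vertices.) *)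

(* A graph H = (V, F) is given by its edge set
   F : {set {set T}} over a finite vertex type T; each edge is a 2-element
   vertex set. A partial edge colouring with k colours is a map
   c : {set T} -> option 'I_k (None = uncoloured); only its values on F matter. *)
From mathcomp Require Import all_boot.
Set Implicit Arguments. Unset Strict Implicit. Unset Printing Implicit Defensive.

Section Defs.
Variable T : finType.

Definition is_graph (F : {set {set T}}) : Prop :=
  forall f, f \in F -> #|f| = 2.

Definition bipartite (F : {set {set T}}) : Prop :=
  exists A : {set T}, forall f, f \in F -> #|f :&: A| = 1.

Definition closed_nbhd (F : {set {set T}}) (f : {set T}) : {set {set T}} :=
  [set g in F | g :&: f != set0].

Definition open_nbhd (F : {set {set T}}) (f : {set T}) : {set {set T}} :=
  closed_nbhd F f :\ f.

Definition single_edge_component (F : {set {set T}}) (f : {set T}) : Prop :=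
  f \in F /\ open_nbhd F f = set0.

Variable k : nat.

Definition unique_colour_for (F : {set {set T}}) (c : {set T} -> option 'I_k)
  (f : {set T}) (a : 'I_k) : Prop :=
  exists2 g, g \in open_nbhd F f &
    (c g = Some a /\
     forall h, h \in closed_nbhd F f -> h != g -> c h <> Some a).

Definition satisfied (F : {set {set T}}) (c : {set T} -> option 'I_k)
  (f : {set T}) : Prop :=
  exists a, unique_colour_for F c f a.

Definition has_unique_edge (F : {set {set T}}) (c : {set T} -> option 'I_k)
  (v : T) : Prop :=
  exists2 f, f \in F /\ v \in f &
    exists a, c f = Some a /\
      forall g, g \in F -> v \in g -> g != f -> c g <> Some a.

(* vertex set V of H: the vertices of positive degree *)
Definition vertex_of (F : {set {set T}}) (v : T) : Prop :=
  exists2 f, f \in F & v \in f.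

End Defs.

From mathcomp Require Import all_boot.
From mathcomp Require Import zify.
Set Implicit Arguments. Unset Strict Implicit. Unset Printing Implicit Defensive.

(* We grow a rooted forest covering the vertices of H one vertex at a time.
   The edge from a non-root vertex to its parent is coloured, colours going
   up by one (mod 4) from each vertex to its children, and every root has
   exactly one child of some colour a and one of colour a + 2; no other edge
   is coloured.  A vertex then sees a unique colour: its parent edge, or, at a
   root, the edge to its a-child.  Along the way we maintain a 2-colouring of
   H off the roots that agrees with the parity of the colours; adjacent
   non-roots therefore get colours differing by one, so that the parent edge
   of one of them satisfies their edge, while an edge at a root is satisfied
   by the parent edge of one of the root's two distinguished children.
   A vertex adjacent to the forest is attached as a child (flipping the
   2-colouring on its component outside the forest if its parent is a root);
   otherwise its component is disjoint from the forest and, since it is not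
   a single edge, contains a path of length two, whose middle vertex becomes
   a new root. *)

Lemma ordS_neq (a : 'I_4) : ordS a != a.
Proof. by case: a => [[|[|[|[|n]]]] ?]. Qed.

Lemma ordS2_neq (a : 'I_4) : ordS (ordS a) != a.
Proof. by case: a => [[|[|[|[|n]]]] ?]. Qed.

Lemma odd_ordS (a : 'I_4) : odd (ordS a) = ~~ odd a.
Proof. by case: a => [[|[|[|[|n]]]] ?]. Qed.

Lemma odd_neq_ordS (a b : 'I_4) : odd a != odd b -> (b == ordS a) || (a == ordS b).
Proof. by case: a => [[|[|[|[|n]]]] ?]; case: b => [[|[|[|[|m]]]] ?]. Qed.

Lemma ordS_avoid (x a : 'I_4) :
  ((a != x) && (ordS a != x)) ||
  ((a != ordS (ordS x)) && (ordS a != ordS (ordS x))).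
Proof. by case: x => [[|[|[|[|n]]]] ?]; case: a => [[|[|[|[|m]]]] ?]. Qed.

Lemma cards1_unique (T : finType) (A : {set T}) : #|A| = 1 ->
  exists2 c, c \in A & forall w, w \in A -> w = c.
Proof.
move=> /eqP /cards1P [c ->]; exists c; first exact: set11.
by move=> w; rewrite inE => /eqP.
Qed.

Section Neighbourhoods.
Variables (T : finType) (F : {set {set T}}).

Lemma open_nbhdI f g z :
  g \in F -> g != f -> z \in g -> z \in f -> g \in open_nbhd F f.
Proof.
move=> gF gf zg zf; rewrite !inE gf gF /=.
by apply/set0Pn; exists z; rewrite inE zg zf.
Qed.

Lemma closed_nbhd_meet f h : h \in closed_nbhd F f -> exists2 z, z \in h & z \in f.
Proof. by rewrite inE => /andP [_ /set0Pn [z]]; rewrite inE => /andP [zh zf]; exists z. Qed.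

End Neighbourhoods.

Section SpanningForest.
Variables (T : finType) (F : {set {set T}}).
Hypothesis graphF : is_graph F.

Lemma edge_neq u v : [set u; v] \in F -> u != v.
Proof. by move=> /graphF; rewrite cards2; case: (u != v). Qed.

Lemma edge_pair f : f \in F -> exists u v, u != v /\ f = [set u; v].
Proof. by move=> fF; apply/cards2P; rewrite graphF. Qed.

Lemma edge_other f v : f \in F -> v \in f -> exists w, f = [set v; w].
Proof.
move=> /edge_pair [a [b [_ ->]]]; rewrite !inE => /orP [] /eqP ->.
  by exists b.
by exists a; rewrite setUC.
Qed.

Definition children (X R : {set T}) (pi : T -> T) (d : T -> 'I_4) (r : T) (a : 'I_4) :=
  [set w in X :\: R | (pi w == r) && (d w == a)].

(* The forest has vertex set X and roots R; the non-root v has parent pi v and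
   its parent edge has colour d v; xr r is the colour a of the root r.  The
   2-colouring p starts as the bipartition of H. *)
Record forest_state (X R : {set T}) (pi : T -> T) (d xr : T -> 'I_4) (p : T -> bool) :
    Prop := ForestState {
  roots_sub : R \subset X;
  parent_edge : forall v, v \in X -> v \notin R ->
    [/\ pi v \in X, [set v; pi v] \in F & pi v \in R \/ d v = ordS (d (pi v))];
  root_child : forall r, r \in R -> #|children X R pi d r (xr r)| = 1;
  root_child2 : forall r, r \in R -> #|children X R pi d r (ordS (ordS (xr r)))| = 1;
  roots_indep : forall u v, u \in R -> v \in R -> [set u; v] \notin F;
  parity_proper : forall u v, u \notin R -> v \notin R -> [set u; v] \in F -> p u != p v;
  parity_colour : forall v, v \in X -> v \notin R -> odd (d v) = p v }.

Section Colouring.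
Variables (X R : {set T}) (pi : T -> T) (d xr : T -> 'I_4) (p : T -> bool).
Hypothesis S : forest_state X R pi d xr p.

Definition forest_colouring (e : {set T}) : option 'I_4 :=
  if [pick v in X :\: R | e == [set v; pi v]] is Some v then Some (d v) else None.

Lemma childrenP r a w :
  reflect [/\ w \in X, w \notin R, pi w = r & d w = a] (w \in children X R pi d r a).
Proof.
rewrite !inE; apply: (iffP idP) => [/and3P [/andP [wR wX] /eqP pw /eqP dw] //|].
by case=> wX wR -> ->; rewrite wX wR !eqxx.
Qed.

Lemma colour_parent v : v \in X -> v \notin R -> pi v \notin R -> d v = ordS (d (pi v)).
Proof. by move=> vX vR; case: (parent_edge S vX vR) => _ _ [->|]. Qed.

Lemma parent_edge_inj v w : v \in X -> v \notin R -> w \in X -> w \notin R ->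
  [set w; pi w] = [set v; pi v] -> w = v.
Proof.
move=> vX vR wX wR E.
have : w \in [set v; pi v] by rewrite -E set21.
rewrite !inE => /orP [/eqP // | /eqP wpv].
have : v \in [set w; pi w] by rewrite E set21.
rewrite !inE => /orP [/eqP -> // | /eqP vpw].
have dv := colour_parent vX vR; rewrite -wpv in dv.
have dw := colour_parent wX wR; rewrite -vpw in dw.
by move: (ordS2_neq (d v)); rewrite -(dw vR) -(dv wR) eqxx.
Qed.

Lemma forest_colouringP e a : forest_colouring e = Some a ->
  exists v, [/\ v \in X, v \notin R, e = [set v; pi v] & d v = a].
Proof.
rewrite /forest_colouring; case: pickP => // v /andP [vXR /eqP ->] [<-].
by exists v; move: vXR; rewrite inE => /andP [-> ->].
Qed.

Lemma forest_colouring_parent v : v \in X -> v \notin R ->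
  forest_colouring [set v; pi v] = Some (d v).
Proof.
move=> vX vR; rewrite /forest_colouring; case: pickP => [w /andP [] | ].
  by rewrite inE => /andP [wR wX] /eqP E; rewrite (@parent_edge_inj v w).
by move/(_ v); rewrite inE vX vR eqxx.
Qed.

Lemma colour_at_nonroot h z a : z \in X -> z \notin R ->
  forest_colouring h = Some a -> z \in h ->
  h = [set z; pi z] /\ a = d z \/ a = ordS (d z).
Proof.
move=> zX zR /forest_colouringP [w [wX wR -> <-]].
rewrite !inE => /orP [] /eqP zE; subst z; first by left.
by right; apply: colour_parent.
Qed.

Lemma colour_at_root h r a : r \in R -> forest_colouring h = Some a -> r \in h ->
  exists2 w, w \in children X R pi d r a & h = [set w; r].
Proof.
move=> rR /forest_colouringP [w [wX wR -> dw]].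
rewrite !inE => /orP [] /eqP rw; first by rewrite -rw rR in wR.
by exists w; [apply/childrenP | rewrite -rw].
Qed.

Lemma root_vertex_unique r : r \in R -> has_unique_edge F forest_colouring r.
Proof.
move=> rR; have [c /childrenP [cX cR pc dc] cu] := cards1_unique (root_child S rR).
have [_ cF _] := parent_edge S cX cR; rewrite pc in cF.
exists [set c; r]; first by rewrite cF set22.
exists (xr r); split; first by rewrite -{1}pc forest_colouring_parent // dc.
move=> g _ rg gne gc; have [w /cu wc gE] := colour_at_root rR gc rg.
by rewrite gE wc eqxx in gne.
Qed.

Lemma nonroot_vertex_unique v : v \in X -> v \notin R ->
  has_unique_edge F forest_colouring v.
Proof.
move=> vX vR; have [_ vF _] := parent_edge S vX vR.
exists [set v; pi v]; first by rewrite vF set21.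
exists (d v); split; first exact: forest_colouring_parent.
move=> g _ vg gne gc; case: (colour_at_nonroot vX vR gc vg) => [[gE _] | /eqP].
  by rewrite gE eqxx in gne.
by rewrite eq_sym (negbTE (ordS_neq _)).
Qed.

Lemma nonroot_edge_satisfied u v : u \in X -> u \notin R -> v \in X -> v \notin R ->
  [set u; v] \in F -> d v = ordS (d u) -> satisfied F forest_colouring [set u; v].
Proof.
move=> uX uR vX vR uvF dv; have [_ uF _] := parent_edge S uX uR.
exists (d u), [set u; pi u].
  apply: (open_nbhdI (z := u)); rewrite ?set21 //; apply/eqP => E.
  have : v \in [set u; pi u] by rewrite E set22.
  rewrite !inE => /orP [/eqP vu | /eqP vpu].
    by move: (edge_neq uvF); rewrite vu eqxx.
  have := colour_parent uX uR; rewrite -vpu dv => /(_ vR) /eqP.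
  by rewrite eq_sym (negbTE (ordS2_neq _)).
split; first exact: forest_colouring_parent.
move=> h /closed_nbhd_meet [z zh]; rewrite !inE => /orP [] /eqP zE hne hc; subst z.
  case: (colour_at_nonroot uX uR hc zh) => [[hE _] | /eqP].
    by rewrite hE eqxx in hne.
  by rewrite eq_sym (negbTE (ordS_neq _)).
case: (colour_at_nonroot vX vR hc zh) => [[_] | ] /eqP; rewrite dv eq_sym.
  by rewrite (negbTE (ordS_neq _)).
by rewrite (negbTE (ordS2_neq _)).
Qed.

(* The edges at the non-root v are coloured d v and d v + 1. *)
Lemma root_edge_satisfied_by r a c v : r \in R -> c \in children X R pi d r a ->
  (forall w, w \in children X R pi d r a -> w = c) ->
  v \in X -> v \notin R -> [set r; v] \in F -> d v != a -> ordS (d v) != a ->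
  satisfied F forest_colouring [set r; v].
Proof.
move=> rR /childrenP [cX cR pc dc] cu vX vR rvF dv sdv.
have [_ cF _] := parent_edge S cX cR; rewrite pc in cF.
exists a, [set c; r].
  apply: (open_nbhdI (z := r)); rewrite ?set22 ?set21 //; apply/eqP => E.
  have : c \in [set r; v] by rewrite -E set21.
  rewrite !inE => /orP [/eqP cr | /eqP cv]; first by rewrite cr rR in cR.
  by rewrite -cv dc eqxx in dv.
split; first by rewrite -{1}pc forest_colouring_parent // dc.
move=> h /closed_nbhd_meet [z zh]; rewrite !inE => /orP [] /eqP zE hne hc; subst z.
  have [w /cu wc hE] := colour_at_root rR hc zh.
  by rewrite hE wc eqxx in hne.
case: (colour_at_nonroot vX vR hc zh) => [[_ E] | E].
  by rewrite E eqxx in dv.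
by rewrite E eqxx in sdv.
Qed.

Lemma root_edge_satisfied r v : r \in R -> v \in X -> v \notin R ->
  [set r; v] \in F -> satisfied F forest_colouring [set r; v].
Proof.
move=> rR vX vR rvF.
have [c1 c1r c1u] := cards1_unique (root_child S rR).
have [c2 c2r c2u] := cards1_unique (root_child2 S rR).
case/orP: (ordS_avoid (xr r) (d v)) => /andP [h1 h2].
  exact: (root_edge_satisfied_by rR c1r c1u).
exact: (root_edge_satisfied_by rR c2r c2u).
Qed.

Hypothesis spanning : forall v, vertex_of F v -> v \in X.

Lemma forest_edge_satisfied f : f \in F -> satisfied F forest_colouring f.
Proof.
move=> fF; have [u [v [_ fE]]] := edge_pair fF.
have uX : u \in X by apply: spanning; exists f; rewrite // fE set21.
have vX : v \in X by apply: spanning; exists f; rewrite // fE set22.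
rewrite fE in fF *.
case: (boolP (u \in R)) => uR; case: (boolP (v \in R)) => vR.
- by move: (roots_indep S uR vR); rewrite fF.
- exact: root_edge_satisfied.
- by rewrite setUC; apply: root_edge_satisfied; rewrite // setUC.
have : odd (d u) != odd (d v).
  by rewrite (parity_colour S uX uR) (parity_colour S vX vR) (parity_proper S).
case/odd_neq_ordS/orP => /eqP duv; first exact: nonroot_edge_satisfied.
by rewrite setUC; apply: nonroot_edge_satisfied; rewrite // setUC.
Qed.

Lemma forest_vertex_unique v : vertex_of F v -> has_unique_edge F forest_colouring v.
Proof.
move=> /spanning vX; case: (boolP (v \in R)) => vR.
  exact: root_vertex_unique.
exact: nonroot_vertex_unique.
Qed.

End Colouring.

Lemma bipartition_neq (A : {set T}) u v : [set u; v] \in F ->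
  #|[set u; v] :&: A| = 1 -> (u \in A) != (v \in A).
Proof.
move=> /edge_neq uv; case uA: (u \in A); case vA: (v \in A) => //.
  suff -> : [set u; v] :&: A = [set u; v] by rewrite cards2 uv.
  by apply/setIidPl/subsetP => z; rewrite !inE => /orP [] /eqP ->.
suff -> : [set u; v] :&: A = set0 by rewrite cards0.
by apply/setP => z; rewrite !inE; apply/negbTE/andP => [[/orP [] /eqP ->]]; rewrite ?uA ?vA.
Qed.

Lemma empty_forest_state (A : {set T}) : (forall f, f \in F -> #|f :&: A| = 1) ->
  forest_state set0 set0 id (fun _ => ord0) (fun _ => ord0) (fun v => v \in A).
Proof.
move=> sideA; split=> [|v|r|r|u v|u v _ _ uvF|v]; rewrite ?inE //.
exact: bipartition_neq (sideA _ uvF).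
Qed.

Definition nonroot_adj (R : {set T}) : rel T :=
  fun a b => [&& a \notin R, b \notin R & [set a; b] \in F].

Definition flip_component (R : {set T}) (y : T) (b : bool) (p : T -> bool) (v : T) :=
  if connect (nonroot_adj R) y v then p v (+) b else p v.

Lemma flip_component_proper (R : {set T}) y b (p : T -> bool) :
  (forall u v, u \notin R -> v \notin R -> [set u; v] \in F -> p u != p v) ->
  forall u v, u \notin R -> v \notin R -> [set u; v] \in F ->
    flip_component R y b p u != flip_component R y b p v.
Proof.
move=> pP u v uR vR uvF; rewrite /flip_component.
have uv : nonroot_adj R u v by rewrite /nonroot_adj uR vR uvF.
have vu : nonroot_adj R v u by rewrite /nonroot_adj uR vR setUC uvF.
case: (boolP (connect _ y u)) => yu; case: (boolP (connect _ y v)) => yv.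
- by move: (pP u v uR vR uvF); case: (p u); case: (p v); case: b.
- by rewrite (connect_trans yu (connect1 uv)) in yv.
- by rewrite (connect_trans yv (connect1 vu)) in yu.
- exact: pP.
Qed.

Lemma connect_outside (X R : {set T}) y w :
  (forall a b, a \notin X -> b \in X -> b \notin R -> [set a; b] \notin F) ->
  y \notin X -> connect (nonroot_adj R) y w -> w \notin X.
Proof.
move=> no_nonroot_nbr yX /connectP [s pth ->] {w}.
elim: s y yX pth => [|b s IH] a aX //=.
move=> /andP [/and3P [_ bR abF] pth]; apply: IH => //.
by apply/negP => bX; move: (no_nonroot_nbr _ _ aX bX bR); rewrite abF.
Qed.

Section Growth.
Variables (X R : {set T}) (pi : T -> T) (d xr : T -> 'I_4) (p : T -> bool).
Hypothesis S : forest_state X R pi d xr p.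

Lemma notin_roots v : v \notin X -> v \notin R.
Proof. by apply: contra; apply: (subsetP (roots_sub S)). Qed.

Lemma children_attach y u b r a : y \notin X -> ~~ ((u == r) && (b == a)) ->
  children (y |: X) R (fun v => if v == y then u else pi v)
    (fun v => if v == y then b else d v) r a = children X R pi d r a.
Proof.
move=> yX h; apply/setP => w; rewrite !inE.
by case: eqVneq => [->|] //=; rewrite (negbTE yX) (negbTE h) !andbF.
Qed.

Lemma update_off (A : Type) (f : T -> A) y u : y \notin X ->
  {in X, (fun v => if v == y then u else f v) =1 f}.
Proof. by move=> yX v vX /=; rewrite ifN //; apply: contraNneq yX => <-. Qed.

Lemma attach_parent_edge y u b (pi' : T -> T) (d' : T -> 'I_4) :
  y \notin X -> u \in X -> [set y; u] \in F -> u \in R \/ b = ordS (d u) ->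
  pi' y = u -> d' y = b -> {in X, pi' =1 pi} -> {in X, d' =1 d} ->
  forall v, v \in y |: X -> v \notin R ->
  [/\ pi' v \in y |: X, [set v; pi' v] \in F & pi' v \in R \/ d' v = ordS (d' (pi' v))].
Proof.
move=> yX uX yuF ub piy dy piX dX v /setU1P [->|vX] vR.
  by rewrite piy dy dX // !inE uX orbT.
have [pX vF pv] := parent_edge S vX vR.
by rewrite piX // !dX // !inE pX orbT.
Qed.

Lemma attach_to_nonroot y u : y \notin X -> u \in X -> u \notin R -> [set y; u] \in F ->
  forest_state (y |: X) R (fun v => if v == y then u else pi v)
    (fun v => if v == y then ordS (d u) else d v) xr p.
Proof.
move=> yX uX uR yuF; have yR := notin_roots yX.
have not_root_child r a : r \in R -> ~~ ((u == r) && (ordS (d u) == a)).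
  by move=> rR; apply: contraNN uR => /andP [/eqP -> _].
split.
- exact: subset_trans (roots_sub S) (subsetUr _ _).
- apply: (attach_parent_edge yX uX yuF (or_intror erefl));
    rewrite ?eqxx //; exact: update_off.
- by move=> r rR; rewrite children_attach ?not_root_child ?(root_child S).
- by move=> r rR; rewrite children_attach ?not_root_child ?(root_child2 S).
- exact: roots_indep S.
- exact: parity_proper S.
- move=> v /setU1P [->|vX] vR; last by rewrite update_off ?(parity_colour S).
  rewrite eqxx odd_ordS (parity_colour S uX uR).
  by move: (parity_proper S yR uR yuF); case: (p u); case: (p y).
Qed.

Lemma attach_to_root y r : y \notin X -> r \in R -> [set y; r] \in F ->
  (forall a b, a \notin X -> b \in X -> b \notin R -> [set a; b] \notin F) ->
  forest_state (y |: X) R (fun v => if v == y then r else pi v)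
    (fun v => if v == y then ordS (xr r) else d v) xr
    (flip_component R y (p y != odd (ordS (xr r))) p).
Proof.
move=> yX rR yrF no_nonroot_nbr; have rX := subsetP (roots_sub S) _ rR.
have not_root_colour r' a : a = xr r' \/ a = ordS (ordS (xr r')) ->
    ~~ ((r == r') && (ordS (xr r) == a)).
  move=> ha; apply/negP => /andP [/eqP rr]; subst r'.
  by case: ha => ->; rewrite ?(negbTE (ordS_neq _)) // eq_sym (negbTE (ordS_neq _)).
split.
- exact: subset_trans (roots_sub S) (subsetUr _ _).
- apply: (attach_parent_edge yX rX yrF (or_introl rR));
    rewrite ?eqxx //; exact: update_off.
- by move=> r' r'R; rewrite children_attach ?(root_child S) ?not_root_colour //; left.
- by move=> r' r'R; rewrite children_attach ?(root_child2 S) ?not_root_colour //; right.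
- exact: roots_indep S.
- exact: flip_component_proper (parity_proper S).
- rewrite /flip_component => v /setU1P [->|vX] vR.
    by rewrite eqxx connect0; case: (p y); case: (odd _).
  rewrite update_off ?(parity_colour S) //.
  by case: ifP => // /(connect_outside no_nonroot_nbr yX); rewrite vX.
Qed.

Section NewRoot.
Variables (r c1 c2 : T) (x : 'I_4).
Hypotheses (rX : r \notin X) (c12 : c1 != c2).
Hypotheses (rc1F : [set r; c1] \in F) (rc2F : [set r; c2] \in F).
Hypothesis r_nbhd_out : forall w, [set r; w] \in F -> w \notin X.

Local Notation X' := (r |: (c1 |: (c2 |: X))).
Local Notation R' := (r |: R).
Local Notation pi' := (fun v => if (v == c1) || (v == c2) then r else pi v).
Local Notation d' :=
  (fun v => if v == c1 then x else if v == c2 then ordS (ordS x) else d v).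

Let c1X : c1 \notin X := r_nbhd_out rc1F.
Let c2X : c2 \notin X := r_nbhd_out rc2F.

Let neqX z w : z \in X -> w \notin X -> (z == w) = false.
Proof. by move=> zX; apply: contraNF => /eqP <-. Qed.

Let rc1 : (r == c1) = false. Proof. exact/negbTE/edge_neq. Qed.
Let rc2 : (r == c2) = false. Proof. exact/negbTE/edge_neq. Qed.

Lemma new_root_old_children r' a : r' \in X ->
  children X' R' pi' d' r' a = children X R pi d r' a.
Proof.
move=> r'X; have rr' : (r == r') = false by rewrite eq_sym neqX.
apply/setP => w; rewrite !inE.
case: (eqVneq w c1) => [->|w1] /=; first by rewrite rr' (negbTE c1X) !andbF.
case: (eqVneq w c2) => [->|w2] /=; first by rewrite rr' (negbTE c2X) !andbF.
by case: (eqVneq w r) => [->|] //=; rewrite (negbTE rX) andbF.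
Qed.

Let no_old_child w : w \in X -> w \notin R -> (pi w == r) = false.
Proof. by move=> wX wR; have [pX _ _] := parent_edge S wX wR; apply: neqX. Qed.

Lemma new_root_children1 : children X' R' pi' d' r x = [set c1].
Proof.
apply/setP => w; rewrite !inE.
case: (eqVneq w c1) => [->|w1] /=; first by rewrite eq_sym rc1 (notin_roots c1X) !eqxx.
case: (eqVneq w c2) => [->|w2] /=; first by rewrite (negbTE (ordS2_neq x)) !andbF.
case: (eqVneq w r) => [->|wr] //=.
by case: (boolP (w \in R)) => //= wR; case: (boolP (w \in X)) => //= wX; rewrite no_old_child.
Qed.

Lemma new_root_children2 : children X' R' pi' d' r (ordS (ordS x)) = [set c2].
Proof.
apply/setP => w; rewrite !inE.
case: (eqVneq w c1) => [->|w1] /=.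
  by rewrite [x == _]eq_sym (negbTE (ordS2_neq x)) (negbTE c12) !andbF.
case: (eqVneq w c2) => [->|w2] /=; first by rewrite eq_sym rc2 (notin_roots c2X) !eqxx.
case: (eqVneq w r) => [->|wr] //=.
by case: (boolP (w \in R)) => //= wR; case: (boolP (w \in X)) => //= wX; rewrite no_old_child.
Qed.

Lemma new_root_parent_edge v : v \in X' -> v \notin R' ->
  [/\ pi' v \in X', [set v; pi' v] \in F & pi' v \in R' \/ d' v = ordS (d' (pi' v))].
Proof.
move=> /setU1P [->|/setU1P [->|/setU1P [->|vX]]] vR.
- by rewrite setU11 in vR.
- by rewrite eqxx /= setU11 setUC rc1F; split=> //; left; rewrite setU11.
- by rewrite eqxx orbT /= setU11 setUC rc2F; split=> //; left; rewrite setU11.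
have vR' : v \notin R by apply: contra vR => vR; rewrite inE vR orbT.
have [pX vF pv] := parent_edge S vX vR'.
rewrite !(@neqX v) ?(@neqX (pi v)) //=; split=> //; first by rewrite !inE pX !orbT.
by case: pv => [pR|->]; [left; rewrite inE pR orbT | right].
Qed.

Lemma new_root : odd x = p c1 ->
  forest_state X' R' pi' d' (fun v => if v == r then x else xr v) p.
Proof.
move=> hx; have RX r' : r' \in R -> r' \in X := subsetP (roots_sub S) r'.
have pc12 : p c1 = p c2.
  have rR := notin_roots rX.
  move: (parity_proper S rR (notin_roots c1X) rc1F).
  move: (parity_proper S rR (notin_roots c2X) rc2F).
  by case: (p r); case: (p c1); case: (p c2).
split.
- apply/subsetP => z /setU1P [->|zR]; first exact: setU11.
  by rewrite !inE RX ?orbT.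
- exact: new_root_parent_edge.
- move=> r' /setU1P [->|r'R]; first by rewrite eqxx new_root_children1 cards1.
  by rewrite (neqX (RX _ r'R) rX) new_root_old_children ?(RX _ r'R) ?(root_child S).
- move=> r' /setU1P [->|r'R]; first by rewrite eqxx new_root_children2 cards1.
  by rewrite (neqX (RX _ r'R) rX) new_root_old_children ?(RX _ r'R) ?(root_child2 S).
- move=> u v /setU1P [->|uR] /setU1P [->|vR].
  + by apply/negP => /edge_neq; rewrite eqxx.
  + by apply/negP => /r_nbhd_out; rewrite RX.
  + by rewrite setUC; apply/negP => /r_nbhd_out; rewrite RX.
  + exact: (roots_indep S uR vR).
- move=> u v; rewrite !inE !negb_or => /andP [_ uR] /andP [_ vR].
  exact: (parity_proper S uR vR).
- move=> v /setU1P [->|/setU1P [->|/setU1P [->|vX]]] vR.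
  + by rewrite setU11 in vR.
  + by rewrite eqxx.
  + by rewrite eq_sym (negbTE c12) eqxx !odd_ordS negbK hx.
  + rewrite !(@neqX v) // (parity_colour S vX) //.
    by apply: contra vR => vR; rewrite inE vR orbT.
Qed.

End NewRoot.

End Growth.

Definition has_larger_state (X : {set T}) : Prop :=
  exists (X' R' : {set T}) (pi' : T -> T) (d' xr' : T -> 'I_4) (p' : T -> bool),
    forest_state X' R' pi' d' xr' p' /\ X \proper X'.

Hypothesis no_single_edge : forall f, ~ single_edge_component F f.

Lemma cherry_at y : vertex_of F y -> exists r c1 c2,
  [/\ c1 != c2, [set r; c1] \in F, [set r; c2] \in F & (y == r) || (y == c1)].
Proof.
move=> [f fF yf]; have [z fE] := edge_other fF yf.
have : open_nbhd F f != set0 by apply/eqP => nbhd0; apply: (no_single_edge (f := f)).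
case/set0Pn => g; rewrite !inE => /and3P [gf gF /set0Pn [t]].
rewrite inE => /andP [tg]; have [w gE] := edge_other gF tg.
rewrite fE !inE => /orP [] /eqP tE; subst t.
- exists y, z, w; rewrite -fE -gE gF fF eqxx; split=> //.
  by apply: contraNneq gf => zw; rewrite gE fE zw.
- exists z, y, w; rewrite setUC -fE -gE gF fF eqxx orbT; split=> //.
  by apply: contraNneq gf => yw; rewrite gE fE yw setUC.
Qed.

Lemma forest_state_grow X R pi d xr p y : forest_state X R pi d xr p ->
  y \notin X -> vertex_of F y -> has_larger_state X.
Proof.
move=> S yX yV.
have proper_add z (Y : {set T}) : X \subset Y -> z \in Y -> z \notin X -> X \proper Y.
  by move=> sXY zY zX; apply/properP; split=> //; exists z.
case: (boolP [exists a, exists b, [&& a \notin X, b \in X, b \notin R & [set a; b] \in F]]).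
  case/existsP => a /existsP [b /and4P [aX bX bR abF]].
  do 6 eexists; split; first apply: (attach_to_nonroot S aX bX bR abF).
  exact: proper_add (subsetUr _ _) (setU11 _ _) aX.
rewrite negb_exists => /forallP no_attach.
have no_nonroot_nbr a b : a \notin X -> b \in X -> b \notin R -> [set a; b] \notin F.
  move=> aX bX bR; move: (no_attach a).
  by rewrite negb_exists => /forallP /(_ b); rewrite aX bX bR.
case: (boolP [exists a, exists r, [&& a \notin X, r \in R & [set a; r] \in F]]).
  case/existsP => a /existsP [r /and3P [aX rR arF]].
  do 6 eexists; split; first apply: (attach_to_root S aX rR arF no_nonroot_nbr).
  exact: proper_add (subsetUr _ _) (setU11 _ _) aX.
rewrite negb_exists => /forallP no_root_nbr.
have out_closed a b : a \notin X -> [set a; b] \in F -> b \notin X.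
  move=> aX abF; apply/negP => bX; case: (boolP (b \in R)) => bR.
    by move: (no_root_nbr a); rewrite negb_exists => /forallP /(_ b); rewrite aX bR abF.
  by move: (no_nonroot_nbr _ _ aX bX bR); rewrite abF.
have [r [c1 [c2 [c12 rc1F rc2F yrc]]]] := cherry_at yV.
have rX : r \notin X.
  case/orP: yrc => /eqP yE; first by rewrite -yE.
  by apply: (out_closed y); rewrite // yE setUC.
have [x hx] : exists x : 'I_4, odd x = p c1.
  by case: (p c1); [exists (inord 1) | exists ord0]; rewrite // inordK.
do 6 eexists; split; first apply: (new_root S rX c12 rc1F rc2F (out_closed r ^~ rX) hx).
by apply: proper_add rX; [apply/subsetP => v vX; rewrite !inE vX !orbT | exact: setU11].
Qed.

Lemma exists_spanning_state n (X R : {set T}) (pi : T -> T) (d xr : T -> 'I_4)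
    (p : T -> bool) :
  #|T| - #|X| <= n -> forest_state X R pi d xr p ->
  exists (X' R' : {set T}) (pi' : T -> T) (d' xr' : T -> 'I_4) (p' : T -> bool),
    forest_state X' R' pi' d' xr' p' /\ forall v, vertex_of F v -> v \in X'.
Proof.
elim: n X R pi d xr p => [|n IH] X R pi d xr p hn S.
  do 6 eexists; split; first exact: S.
  suff -> : X = setT by move=> v _; rewrite inE.
  by apply/eqP; rewrite eqEcard subsetT cardsT -subn_eq0 -leqn0.
case: (boolP [exists y, (y \notin X) && [exists f in F, y \in f]]).
  case/existsP => y /andP [yX /existsP [f /andP [fF yf]]].
  have [X' [R' [pi' [d' [xr' [p' [S' /proper_card lt]]]]]]] :=
    forest_state_grow S yX (ex_intro2 _ _ f fF yf).
  apply: (IH X' R' pi' d' xr' p') => //.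
  by move: (max_card (mem X')) hn lt; lia.
rewrite negb_exists => /forallP none.
do 6 eexists; split; first exact: S.
move=> v [f fF vf]; apply: contraT => vX; move: (none v).
by rewrite vX /= => /existsPn /(_ f); rewrite fF vf.
Qed.

End SpanningForest.

Theorem mainTheorem7 (T : finType) (F : {set {set T}}) :
  is_graph F -> bipartite F ->
  (forall f, ~ single_edge_component F f) ->
  exists c : {set T} -> option 'I_4,
    (forall f, f \in F -> satisfied F c f) /\
    (forall v, vertex_of F v -> has_unique_edge F c v).
Proof.
move=> graphF [A sideA] no_single_edge.
have [X [R [pi [d [xr [p [S spanning]]]]]]] :=
  exists_spanning_state graphF no_single_edge (leq_subr _ _) (empty_forest_state graphF sideA).
exists (forest_colouring X R pi d); split.
  exact: forest_edge_satisfied S spanning.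
exact: forest_vertex_unique S spanning.
Qed.
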